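(* Let $S(z)$ be a Rosenbrock system matrix and $\lambda\in\mathbb{C}$ with $S(\lambda)$ invertible. Then $$\eta^{\mathbb{S}}(\lambda,A,B)=(\mu_{\mathcal{S}}(M))^{-1},\qquad M=S(\lambda)^{-1}\begin{bmatrix}I_r&I_r\\0_{n,r}&0_{n,r}\end{bmatrix},$$ where $\mathcal{S}=\{\operatorname{diag}(\Delta_1,\Delta_2) : \Delta_1\in\mathbb{C}^{r,r},\ \Delta_2\in\mathbb{C}^{r,n}\}$.
   Context: A Rosenbrock system matrix is $S(z)=\begin{bmatrix}A-zI_r & B\\ C & P(z)\end{bmatrix}$ with $A\in\mathbb{C}^{r,r}$, $B\in\mathbb{C}^{r,n}$, $C\in\mathbb{C}^{n,r}$, $P(z)=\sum_{k=0}^d z^kA_k$, $A_k\in\mathbb{C}^{n,n}$. $\|\cdot\|$ is the spectral norm. The backward error with perturbation of blocks $A$ and $B$ only is $\eta^{\mathbb{S}}(\lambda,A,B):=\inf\{\max\{\|\Delta_A\|,\|\Delta_B\|\} : \Delta_A\in\mathbb{C}^{r,r},\Delta_B\in\mathbb{C}^{r,n},\ \det(S(\lambda)-\begin{bmatrix}\Delta_A&\Delta_B\\0&0\end{bmatrix})=0\}$. Structured $\mu$-value: for $M\in\mathbb{C}^{k,p}$ and $\mathcal{S}\subseteq\mathbb{C}^{p,k}$, $\mu_{\mathcal{S}}(M):=\big(\inf\{\|\Delta\| : \Delta\in\mathcal{S},\ \det(I_p-\Delta M)=0\}\big)^{-1}$, with $\mu_{\mathcal S}(M)=0$ if no such $\Delta$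 exists; $\operatorname{diag}$ of rectangular blocks is the block-diagonal matrix with those blocks. *)

From HB Require Import structures.
From mathcomp Require Import all_boot all_order all_algebra.
From mathcomp Require Import all_classical all_reals ereal.
From mathcomp Require Import complex.
Set Implicit Arguments. Unset Strict Implicit. Unset Printing Implicit Defensive.
Import Order.TTheory GRing.Theory Num.Theory.
Local Open Scope ring_scope.
Local Open Scope classical_set_scope.

Definition vnorm2 (R : realType) (m : nat) (x : 'cV[R[i]]_m) : R :=
  Num.sqrt (\sum_(i < m) (ComplexField.Normc.normc (x i 0)) ^+ 2).

Definition specnorm (R : realType) (m n : nat) (A : 'M[R[i]]_(m, n)) : R :=
  sup [set vnorm2 (A *m x) | x in [set x : 'cV[R[i]]_n | vnorm2 x <= 1]].

Definition polyM (R : realType) (n d : nat) (Ak : 'I_d.+1 -> 'M[R[i]]_n)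
  (z : R[i]) : 'M[R[i]]_n := \sum_(k < d.+1) (z ^+ k) *: Ak k.

Definition rosenbrock (R : realType) (r n d : nat)
  (A : 'M[R[i]]_r) (B : 'M[R[i]]_(r, n)) (C : 'M[R[i]]_(n, r))
  (Ak : 'I_d.+1 -> 'M[R[i]]_n) (z : R[i]) : 'M[R[i]]_(r + n) :=
  block_mx (A - z%:M) B C (polyM Ak z).

Definition eta_AB (R : realType) (r n d : nat)
  (A : 'M[R[i]]_r) (B : 'M[R[i]]_(r, n)) (C : 'M[R[i]]_(n, r))
  (Ak : 'I_d.+1 -> 'M[R[i]]_n) (lam : R[i]) : \bar R :=
  ereal_inf [set e : \bar R | exists (DA : 'M[R[i]]_r) (DB : 'M[R[i]]_(r, n)),
      \det (rosenbrock A B C Ak lam - block_mx DA DB 0 0) = 0 /\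
      e = (Num.max (specnorm DA) (specnorm DB))%:E].

(* Structured mu-value: mu_S(M) = (inf{||D|| : D in S, det(I_p - D M) = 0})^-1,
   with inf of the empty set = +oo and +oo^-1 = 0 (so mu = 0 if no such D). *)
Definition mu_S (R : realType) (k p : nat) (S : set 'M[R[i]]_(p, k))
  (M : 'M[R[i]]_(k, p)) : \bar R :=
  let nu : \bar R := ereal_inf [set (specnorm D)%:E
     | D in [set D | S D /\ \det (1%:M - D *m M) = 0]] in
  (nu ^-1)%E.

Definition blockdiag_set (R : realType) (r n : nat) : set 'M[R[i]]_(r + r, r + n) :=
  [set D | exists (D1 : 'M[R[i]]_r) (D2 : 'M[R[i]]_(r, n)), D = block_mx D1 0 0 D2].

(* The perturbation [block_mx DA DB 0 0] factors as [E *m diag(DA, DB)] with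
   [E = col_mx (row_mx 1 1) 0], so [S - E D = S (1 - S^-1 E D)] and, by
   Sylvester's determinant identity, [det (S - E D) = 0] iff
   [det (1 - D (S^-1 E)) = 0].  The admissible perturbations of the two infima
   therefore correspond exactly, and the costs agree because the spectral norm
   of a block-diagonal matrix is the maximum of the norms of its blocks. *)
From HB Require Import structures.
From mathcomp Require Import all_boot all_order all_algebra.
From mathcomp Require Import all_classical all_reals ereal.
From mathcomp Require Import complex.
Set Implicit Arguments. Unset Strict Implicit.
Import Order.TTheory GRing.Theory Num.Theory.
Local Open Scope ring_scope.
Local Open Scope classical_set_scope.

Section EuclideanNorm.
Variable R : realType.
Notation normc := (@ComplexField.Normc.normc R).

Lemma normc_ge0 (z : R[i]) : 0 <= normc z.
Proof. by case: z => a b; rewrite /= sqrtr_ge0. Qed.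

Lemma normc_real (c : R) : 0 <= c -> normc (c%:C)%C = c.
Proof. by move=> c0; rewrite /= expr0n /= addr0 sqrtr_sqr ger0_norm. Qed.

Lemma normc_sum I (s : seq I) (P : pred I) (F : I -> R[i]) :
  normc (\sum_(i <- s | P i) F i) <= \sum_(i <- s | P i) normc (F i).
Proof.
apply: (big_rec2 (fun y1 y2 => normc y1 <= y2)).
  by rewrite (ComplexField.Normc.normc0 R).
by move=> i y1 y2 _ h; apply: le_trans (le_normcD _ _) _; apply: lerD.
Qed.

Lemma vnorm2_ge0 m (x : 'cV[R[i]]_m) : 0 <= vnorm2 x.
Proof. exact: sqrtr_ge0. Qed.

Lemma sqr_vnorm2 m (x : 'cV[R[i]]_m) :
  vnorm2 x ^+ 2 = \sum_(i < m) normc (x i 0) ^+ 2.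
Proof. by rewrite sqr_sqrtr // sumr_ge0 // => i _; rewrite sqr_ge0. Qed.

Lemma vnorm2_eq0 m (x : 'cV[R[i]]_m) : vnorm2 x = 0 -> x = 0.
Proof.
move=> /(congr1 (fun t => t ^+ 2)); rewrite sqr_vnorm2 expr0n /= => /eqP.
rewrite psumr_eq0 => [/allP x0|i _]; last by rewrite sqr_ge0.
apply/matrixP => i j; rewrite ord1 mxE; apply: ComplexField.Normc.eq0_normc.
by apply/eqP; rewrite -sqrf_eq0; apply: x0; rewrite mem_index_enum.
Qed.

Lemma vnorm2_0 m : vnorm2 (0 : 'cV[R[i]]_m) = 0.
Proof.
rewrite /vnorm2 big1 ?sqrtr0 // => i _.
by rewrite mxE (ComplexField.Normc.normc0 R) expr0n.
Qed.

Lemma vnorm2Z m (c : R) (x : 'cV[R[i]]_m) : 0 <= c ->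
  vnorm2 ((c%:C)%C *: x) = c * vnorm2 x.
Proof.
move=> c0; rewrite /vnorm2.
under eq_bigr do rewrite mxE ComplexField.Normc.normcM normc_real // exprMn.
by rewrite -mulr_sumr sqrtrM ?sqr_ge0 // sqrtr_sqr ger0_norm.
Qed.

Lemma normc_le_vnorm2 m (x : 'cV[R[i]]_m) j : normc (x j 0) <= vnorm2 x.
Proof.
rewrite -(ger0_norm (normc_ge0 _)) -sqrtr_sqr ler_sqrt; last first.
  by apply: sumr_ge0 => i _; rewrite sqr_ge0.
by rewrite (bigD1 j) //= lerDl sumr_ge0 // => i _; rewrite sqr_ge0.
Qed.

Lemma sqr_vnorm2_col m1 m2 (x1 : 'cV[R[i]]_m1) (x2 : 'cV[R[i]]_m2) :
  vnorm2 (col_mx x1 x2) ^+ 2 = vnorm2 x1 ^+ 2 + vnorm2 x2 ^+ 2.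
Proof.
rewrite !sqr_vnorm2 big_split_ord /=.
by congr (_ + _); apply: eq_bigr => i _; rewrite ?col_mxEu ?col_mxEd.
Qed.

Lemma vnorm2_col_mx0 m1 m2 (x : 'cV[R[i]]_m1) :
  vnorm2 (col_mx x (0 : 'cV_m2)) = vnorm2 x.
Proof.
apply/eqP; rewrite -(@eqrXn2 _ 2) ?vnorm2_ge0 //.
by rewrite sqr_vnorm2_col vnorm2_0 expr0n addr0.
Qed.

Lemma vnorm2_col_0mx m1 m2 (x : 'cV[R[i]]_m2) :
  vnorm2 (col_mx (0 : 'cV_m1) x) = vnorm2 x.
Proof.
apply/eqP; rewrite -(@eqrXn2 _ 2) ?vnorm2_ge0 //.
by rewrite sqr_vnorm2_col vnorm2_0 expr0n add0r.
Qed.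

End EuclideanNorm.

Section SpectralNorm.
Variables (R : realType) (m k : nat).
Implicit Types (A : 'M[R[i]]_(m, k)) (x : 'cV[R[i]]_k).
Notation normc := (@ComplexField.Normc.normc R).

Lemma vnorm2_mulmx_ball_bounded A : has_ubound
  [set vnorm2 (A *m x) | x in [set x : 'cV[R[i]]_k | vnorm2 x <= 1]].
Proof.
exists (Num.sqrt (\sum_(i < m) (\sum_(j < k) normc (A i j)) ^+ 2)).
move=> _ [x x1 <-]; rewrite ler_sqrt; last first.
  by apply: sumr_ge0 => i _; rewrite sqr_ge0.
apply: ler_sum => i _; apply: lerXn2r; rewrite ?nnegrE ?normc_ge0 //.
  by apply: sumr_ge0 => j _; apply: normc_ge0.
rewrite mxE; apply: le_trans (normc_sum _ _ _) _; apply: ler_sum => j _.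
rewrite ComplexField.Normc.normcM -[leRHS]mulr1 ler_wpM2l ?normc_ge0 //.
exact: le_trans (normc_le_vnorm2 _ _) x1.
Qed.

Lemma specnorm_ub A x : vnorm2 x <= 1 -> vnorm2 (A *m x) <= specnorm A.
Proof. by move=> x1; apply: (ub_le_sup (vnorm2_mulmx_ball_bounded A)); exists x. Qed.

Lemma specnorm_ge0 A : 0 <= specnorm A.
Proof.
by have := @specnorm_ub A 0; rewrite mulmx0 !vnorm2_0; apply; rewrite ler01.
Qed.

Lemma specnorm_le A c :
  (forall x, vnorm2 x <= 1 -> vnorm2 (A *m x) <= c) -> specnorm A <= c.
Proof.
move=> Ac; apply: ge_sup => [|_ [x x1 <-]]; last exact: Ac.
by exists (vnorm2 (A *m 0)), 0 => //=; rewrite vnorm2_0 ler01.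
Qed.

Lemma vnorm2_mulmx_le A x : vnorm2 (A *m x) <= specnorm A * vnorm2 x.
Proof.
have [/vnorm2_eq0 ->|x_neq0] := eqVneq (vnorm2 x) 0.
  by rewrite mulmx0 !vnorm2_0 mulr0.
have x_gt0 : 0 < vnorm2 x by rewrite lt_def x_neq0 vnorm2_ge0.
have unit_x : vnorm2 (((vnorm2 x)^-1%:C)%C *: x) <= 1.
  by rewrite vnorm2Z ?invr_ge0 ?vnorm2_ge0 // mulVf.
have := specnorm_ub A unit_x.
by rewrite -scalemxAr vnorm2Z ?invr_ge0 ?vnorm2_ge0 // ler_pdivrMl // mulrC.
Qed.

End SpectralNorm.

Lemma specnorm_block_diag (R : realType) (p q r s : nat)
    (D1 : 'M[R[i]]_(p, q)) (D2 : 'M[R[i]]_(r, s)) :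
  specnorm (block_mx D1 0 0 D2) = Num.max (specnorm D1) (specnorm D2).
Proof.
set D := block_mx D1 0 0 D2; set M := Num.max (specnorm D1) (specnorm D2).
have D_col x1 x2 : D *m col_mx x1 x2 = col_mx (D1 *m x1) (D2 *m x2).
  by rewrite mul_block_col !mul0mx addr0 add0r.
have M_ge0 : 0 <= M by rewrite le_max specnorm_ge0.
apply/le_anti/andP; split.
  have sqr_le p' q' (Dj : 'M[R[i]]_(p', q')) y : specnorm Dj <= M ->
      vnorm2 (Dj *m y) ^+ 2 <= (M * vnorm2 y) ^+ 2.
    move=> Dj_le; rewrite lerXn2r ?nnegrE ?vnorm2_ge0 ?mulr_ge0 ?vnorm2_ge0 //.
    by apply: le_trans (vnorm2_mulmx_le _ _) _; rewrite ler_wpM2r ?vnorm2_ge0.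
  have D_le x : vnorm2 (D *m x) <= M * vnorm2 x.
    rewrite -(vsubmxK x) D_col -(@ler_pXn2r _ 2) ?nnegrE ?mulr_ge0 ?vnorm2_ge0 //.
    rewrite exprMn !sqr_vnorm2_col mulrDr -!exprMn.
    by apply: lerD; apply: sqr_le; rewrite le_max lexx ?orbT.
  apply: specnorm_le => x x1; apply: le_trans (D_le x) _.
  by rewrite -[leRHS]mulr1 ler_wpM2l.
rewrite ge_max; apply/andP; split; apply: specnorm_le => x x1.
  by have := specnorm_ub D (x := col_mx x 0);
    rewrite D_col mulmx0 !vnorm2_col_mx0; apply.
by have := specnorm_ub D (x := col_mx 0 x);
  rewrite D_col mulmx0 !vnorm2_col_0mx; apply.
Qed.

Lemma det_1B_mulmxC (K : comNzRingType) m k (P : 'M[K]_(m, k)) (Q : 'M[K]_(k, m)) :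
  \det (1%:M - P *m Q) = \det (1%:M - Q *m P).
Proof.
(* Both sides are the determinant of [block_mx 1 P Q 1], via its two
   block LU factorizations. *)
have eQP : block_mx 1%:M P Q 1%:M =
    block_mx 1%:M 0 Q 1%:M *m block_mx 1%:M P 0 (1%:M - Q *m P).
  by rewrite mulmx_block ?mul1mx ?mulmx1 ?mul0mx ?addr0 ?add0r (addrC (Q *m P)) subrK.
have ePQ : block_mx 1%:M P Q 1%:M =
    block_mx 1%:M P 0 1%:M *m block_mx (1%:M - P *m Q) 0 Q 1%:M.
  by rewrite mulmx_block ?mul1mx ?mulmx1 ?mul0mx ?addr0 ?add0r subrK.
have := congr1 determinant eQP; rewrite ePQ !det_mulmx.
by rewrite det_lblock det_ublock det_ublock det_lblock !det1 !mul1r mulr1.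
Qed.

Lemma det_sub_perturbation_eq0 (F : fieldType) (p q : nat) (S : 'M[F]_p)
    (E : 'M[F]_(p, q)) (D : 'M[F]_(q, p)) : S \in unitmx ->
  (\det (S - E *m D) = 0) <-> (\det (1%:M - D *m (invmx S *m E)) = 0).
Proof.
move=> S_unit; have S_neq0 : \det S != 0 by rewrite -unitfE -unitmxE.
have -> : S - E *m D = S *m (1%:M - invmx S *m E *m D).
  by rewrite mulmxBr mulmx1 !mulmxA mulmxV // mul1mx.
rewrite det_mulmx -det_1B_mulmxC.
by split => [/eqP|->]; rewrite ?mulr0 // mulf_eq0 (negPf S_neq0) => /eqP.
Qed.

Lemma block_mx_top_row_factor (F : pzRingType) (r n : nat)
    (DA : 'M[F]_r) (DB : 'M[F]_(r, n)) :
  block_mx DA DB 0 0 =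
  col_mx (row_mx 1%:M 1%:M) (0 : 'M_(n, r + r)) *m block_mx DA 0 0 DB.
Proof.
by rewrite mul_col_mx mul_row_block mul0mx !mul1mx addr0 add0r -row_mx0.
Qed.

Theorem theorem2p4 (R : realType) (r n d : nat)
  (A : 'M[R[i]]_r) (B : 'M[R[i]]_(r, n)) (C : 'M[R[i]]_(n, r))
  (Ak : 'I_d.+1 -> 'M[R[i]]_n) (lam : R[i]) :
  rosenbrock A B C Ak lam \in unitmx ->
  eta_AB A B C Ak lam =
  ((mu_S (@blockdiag_set R r n)
     (invmx (rosenbrock A B C Ak lam)
        *m col_mx (row_mx (1%:M : 'M[R[i]]_r) (1%:M : 'M[R[i]]_r))
                  (0 : 'M[R[i]]_(n, r + r))))^-1)%E.
Proof.
move=> S_unit; rewrite /mu_S /= inveK /eta_AB; congr ereal_inf.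
apply/seteqP; split => e.
  move=> [DA [DB [S_sing ->]]]; exists (block_mx DA 0 0 DB).
    split; first by exists DA, DB.
    apply/(det_sub_perturbation_eq0 _ _ S_unit).
    by rewrite -block_mx_top_row_factor.
  by rewrite specnorm_block_diag.
move=> [_ [[DA [DB ->]] I_sub_sing] <-]; exists DA, DB; split.
  by rewrite block_mx_top_row_factor; apply/(det_sub_perturbation_eq0 _ _ S_unit).
by rewrite specnorm_block_diag.
Qed.
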